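(* Let $G$ be a simple loopless graph on $[L]$ and $p\ge1$. The map $\Phi_p:\Pi_{2p}(G)\to\mathcal{P}_{2p}(G)$ is injective.
   Context: $\mathcal{T}(G)=\langle v\in[L]: uv=vu \text{ for } (u,v)\in E(G)\rangle$ is the trace monoid of $G$, $e$ the empty word. Words are adjacent, $w_1\leftrightarrow w_2$, if $w_1=vw_2$ or $w_2=vw_1$ for a letter $v$. $\mathcal{P}_{2p}(G)=\{w\in\mathcal{T}(G)^{2p}: e\leftrightarrow w_1\leftrightarrow\cdots\leftrightarrow w_{2p}=e\}$. $P_2(2p)$ is the set of pair partitions of $[2p]$; blocks $\{u_1,v_1\},\{u_2,v_2\}$ cross if $u_1<u_2<v_1<v_2$; $F_\pi$ is the graph on the blocks of $\pi$ with edges between crossing blocks. $\Pi_{2p}(G)=\{(\pi,\phi):\pi\in P_2(2p),\ \phi\in\operatorname{Hom}(F_\pi,G)\}$. Definition of $\Phi_p$ (it takes values in $\mathcal{P}_{2p}(G)$): (1) For $p=1$, if $\phi$ assigns label $i$ to the block $\{1,2\}$, $\Phi_1(\pi,\phi)=(i,e)$. (2) Given $\Phi_p$ and $(\pi,\phi)\in\Pi_{2(p+1)}(G)$, let $r$ be the smallest index that is the larger element of its block, $U=\{s,r\}\in\pi$ with $s<r$, $i_s=\phi(U)$, $\sigma=\pi\setminus\{U\}$, $\psi=\phi|_\sigma$. Identify $P_2([2(p+1)]\setminus\{s,r\})$ with $P_2(2p)$ via the order-preserving bijection, write $u=\Phi_p(\sigma,\psi)=(u_k)_{k\in[2(p+1)]\setminus\{s,r\}}$,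 and let $u_{k^-}$ be $u_j$ for the largest $j<k$, $j\notin\{s,r\}$, or $e$ if none exists. Then $\Phi_{p+1}(\pi,\phi)_k=u_k$ for $k<s$; $i_su_{s^-}$ for $k=s$; $i_su_k$ for $s<k<r$; $u_{r^-}$ for $k=r$; $u_k$ for $k>r$. *)

From mathcomp Require Import all_boot.
From Stdlib Require Import Relations.
Set Implicit Arguments. Unset Strict Implicit. Unset Printing Implicit Defensive.

(* Elements of T(G) are represented by words
   (seq 'I_L); equality in T(G) is the congruence generated by uv = vu for
   every edge (u,v) of G, i.e. the equivalence closure of swapping two
   adjacent commuting letters. *)
Inductive trace_step (L : nat) (G : rel 'I_L) : seq 'I_L -> seq 'I_L -> Prop :=
| ts_swap (s1 s2 : seq 'I_L) (u v : 'I_L) :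
    G u v -> trace_step G (s1 ++ u :: v :: s2) (s1 ++ v :: u :: s2).

Definition trace_eq (L : nat) (G : rel 'I_L) : relation (seq 'I_L) :=
  clos_refl_sym_trans _ (trace_step G).

Definition simple_loopless (L : nat) (G : rel 'I_L) : Prop :=
  ssrbool.symmetric G /\ ssrbool.irreflexive G.

(* A pair partition pi of [n] is
   represented by its partner map (a fixed-point free involution of [n]):
   the blocks are {k, pi k}.  A labelling phi of the blocks is represented
   by a map lab on positions that is constant on blocks (lab (pi k) = lab k),
   phi({k, pi k}) = lab k.  Only the values on [n] matter. *)
Definition in_range (n k : nat) : bool := (1 <= k <= n).

Definition is_pair_partition (n : nat) (pi : nat -> nat) : Prop :=
  forall k, in_range n k -> [/\ in_range n (pi k), pi k != k & pi (pi k) = k].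

Definition crossing (pi : nat -> nat) (a b : nat) : bool :=
  let u1 := minn a (pi a) in let v1 := maxn a (pi a) in
  let u2 := minn b (pi b) in let v2 := maxn b (pi b) in
  [&& u1 < u2, u2 < v1 & v1 < v2].

(* (pi, lab) is an element of Pi_n(G): lab is a well-defined labelling of the
   blocks of pi which is a graph homomorphism F_pi -> G. *)
Definition in_Pi (L : nat) (G : rel 'I_L) (n : nat)
    (pi : nat -> nat) (lab : nat -> 'I_L) : Prop :=
  [/\ is_pair_partition n pi,
      (forall k, in_range n k -> lab (pi k) = lab k) &
      (forall a b, in_range n a -> in_range n b -> crossing pi a b ->
                   G (lab a) (lab b))].

Definition remaining (n s r : nat) : seq nat :=
  [seq k <- iota 1 n | (k != s) && (k != r)].

(* order-preserving bijection [n] \ {s,r} -> [n-2] and its inverse *)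
Definition relab (n s r k : nat) : nat := (index k (remaining n s r)).+1.
Definition unrelab (n s r j : nat) : nat := nth 0 (remaining n s r) j.-1.

Fixpoint Phi (L : nat) (p : nat) (pi : nat -> nat) (lab : nat -> 'I_L)
    {struct p} : nat -> seq 'I_L :=
  match p with
  | 0 => fun _ => [::]
  | p'.+1 =>
    if p' == 0 then
      (* Phi_1 (pi, phi) = (i, e), i the label of the block {1,2} *)
      fun k => if k == 1 then [:: lab 1] else [::]
    else
      let n := (p'.+1).*2 in
      let r := head 0 [seq k <- iota 1 n | pi k < k] in
      let s := pi r in
      let i := lab r in
      let sigma := fun j => relab n s r (pi (unrelab n s r j)) in
      let psi := fun j => lab (unrelab n s r j) in
      let u' := Phi p' sigma psi in
      let u := fun k => u' (relab n s r k) in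
      (* u_{k^-}: u_j for the largest j < k, j not in {s,r}, or e *)
      let uminus := fun k =>
        let js := [seq j <- iota 1 k.-1 | (j != s) && (j != r)] in
        if js is [::] then [::] else u (last 0 js) in
      fun k =>
        if k < s then u k
        else if k == s then i :: uminus s
        else if k < r then i :: u k
        else if k == r then uminus r
        else u k
  end.

From mathcomp Require Import all_boot zify.
Set Implicit Arguments. Unset Strict Implicit. Unset Printing Implicit Defensive.

(* Trace equivalence preserves the number of occurrences of each letter, so it
   suffices to recover (pi, phi) from these multiplicities.  Following the
   recursion defining Phi, the letter x occurs in Phi(pi, phi)_k as often as
   there are blocks {a, b} of pi with a <= k < b and label x.  Scanning
   k = 1, 2, ..., the change of these counts at k tells whether k opens or
   closes a block, and its label.  If k closes blocks {a1, k} of pi1 and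
   {a2, k} of pi2 with a1 < a2, the pairings agreeing before k, then a2 opens
   in pi1 a block that ends after k; it crosses {a1, k} and carries the same
   label, which would be a loop of G. *)

Lemma trace_eq_count L (G : rel 'I_L) w1 w2 :
  trace_eq G w1 w2 -> forall x, count_mem x w1 = count_mem x w2.
Proof.
move=> E x; elim: E => [_ _ [s1 s2 u v _]| | |_ _ _ _ -> _ ->] //=.
by rewrite !count_cat /=; lia.
Qed.

Definition open_count L (A : seq nat) (pi : nat -> nat) (lab : nat -> 'I_L)
    (k : nat) (x : 'I_L) : nat :=
  count (fun a => (a <= k < pi a) && (lab a == x)) A.

Lemma open_count0 L A pi (lab : nat -> 'I_L) x :
  {in A, forall a, 0 < a} -> open_count A pi lab 0 x = 0.
Proof.
move=> A_pos; rewrite /open_count (eq_in_count (a2 := pred0)) ?count_pred0 //.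
by move=> a /A_pos; case: a.
Qed.

Lemma open_count_skip L A pi (lab : nat -> 'I_L) k x :
  {in A, forall a, (a != k.+1) && (pi a != k.+1)} ->
  open_count A pi lab k.+1 x = open_count A pi lab k x.
Proof. by move=> Ak; apply: eq_in_count => a /Ak ak; congr (_ && _); lia. Qed.

Lemma sorted_leq_index_mono (s : seq nat) :
  sorted ltn s -> {in s &, {mono index^~ s : a b / a <= b}}.
Proof.
move=> s_sorted a b a_s b_s; apply/idP/idP => [|le_ab].
  by apply: (sorted_leq_index leq_trans leqnn (sub_sorted ltnW s_sorted)).
rewrite leqNgt; apply/negP => /(sorted_ltn_index ltn_trans s_sorted _ _ b_s a_s).
by rewrite ltnNge le_ab.
Qed.

Section Remaining.
Variables n s r : nat.

Lemma mem_remaining k :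
  (k \in remaining n s r) = [&& k != s, k != r & in_range n k].
Proof. by rewrite /remaining mem_filter mem_iota add1n ltnS -andbA. Qed.

Lemma remaining_range : {subset remaining n s r <= in_range n}.
Proof. by move=> k; rewrite mem_remaining => /and3P[]. Qed.

Lemma sorted_remaining : sorted ltn (remaining n s r).
Proof. exact: (sorted_filter ltn_trans _ (iota_ltn_sorted 1 n)). Qed.

Lemma uniq_remaining : uniq (remaining n s r).
Proof. exact: sorted_uniq ltn_trans ltnn _ sorted_remaining. Qed.

Lemma perm_iota_remaining : in_range n s -> in_range n r -> s != r ->
  perm_eq (iota 1 n) [:: s, r & remaining n s r].
Proof.
move=> s_range r_range s_neq_r.
have rem_iota : remaining n s r = rem r (rem s (iota 1 n)).
  rewrite rem_filter ?rem_uniq ?iota_uniq // rem_filter ?iota_uniq //.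
  by rewrite -filter_predI; apply: eq_filter => k /=; rewrite andbC.
have s_iota : s \in iota 1 n by rewrite mem_iota add1n ltnS.
have r_rem : r \in rem s (iota 1 n).
  by rewrite mem_rem_uniq ?iota_uniq // inE eq_sym s_neq_r mem_iota add1n ltnS.
apply: perm_trans (perm_to_rem s_iota) _.
by rewrite perm_cons rem_iota; apply: perm_to_rem.
Qed.

Lemma relab_range k : k \in remaining n s r ->
  in_range (size (remaining n s r)) (relab n s r k).
Proof. by rewrite /in_range /relab -index_mem ltnS. Qed.

Lemma unrelab_relab k : k \in remaining n s r -> unrelab n s r (relab n s r k) = k.
Proof. exact: nth_index. Qed.

Lemma unrelab_mem j : in_range (size (remaining n s r)) j ->
  unrelab n s r j \in remaining n s r.
Proof. by case: j => // j /andP[_ j_lt]; apply: mem_nth. Qed.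

Lemma relab_unrelab j : in_range (size (remaining n s r)) j ->
  relab n s r (unrelab n s r j) = j.
Proof.
by case: j => // j /andP[_ j_lt]; rewrite /relab index_uniq ?uniq_remaining.
Qed.

Lemma leq_relab : {in remaining n s r &, {mono relab n s r : a b / a <= b}}.
Proof.
by move=> a b a_rem b_rem; rewrite ltnS sorted_leq_index_mono ?sorted_remaining.
Qed.

Lemma ltn_relab : {in remaining n s r &, {mono relab n s r : a b / a < b}}.
Proof. exact: leqW_mono_in leq_relab. Qed.

Lemma map_relab : map (relab n s r) (remaining n s r) = iota 1 (size (remaining n s r)).
Proof.
apply: (@eq_from_nth _ 0) => [|i]; rewrite size_map ?size_iota // => i_lt.
by rewrite (nth_map 0) // nth_iota // /relab index_uniq ?uniq_remaining.
Qed.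

End Remaining.

Definition restrict_pairing n s r (pi : nat -> nat) (j : nat) : nat :=
  relab n s r (pi (unrelab n s r j)).

Definition restrict_labels L n s r (lab : nat -> 'I_L) (j : nat) : 'I_L :=
  lab (unrelab n s r j).

(* [prev_word u s r k] is the paper's u_{k^-}, and [insert_block u i s r] is
   step (2) of the definition of Phi, with u indexed by the positions of
   [remaining n s r]. *)
Definition prev_word L (u : nat -> seq 'I_L) s r k : seq 'I_L :=
  if remaining k.-1 s r is [::] then [::] else u (last 0 (remaining k.-1 s r)).

Definition insert_block L (u : nat -> seq 'I_L) (i : 'I_L) s r k : seq 'I_L :=
  if k < s then u k
  else if k == s then i :: prev_word u s r s
  else if k < r then i :: u k
  else if k == r then prev_word u s r r
  else u k.

Section RemoveBlock.
Variables (L n : nat) (pi : nat -> nat) (lab : nat -> 'I_L) (s r : nat).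
Hypotheses (pi_pairing : is_pair_partition n pi) (r_range : in_range n r).
Hypothesis pi_r : pi r = s.

Lemma block_facts : [/\ in_range n s, s != r & pi s = r].
Proof. by rewrite -pi_r; apply: pi_pairing. Qed.

Lemma pi_remaining : {in remaining n s r, forall a, pi a \in remaining n s r}.
Proof.
have [_ _ pi_s] := block_facts.
move=> a; rewrite !mem_remaining => /and3P[a_s a_r a_range].
have [pa_range _ pia] := pi_pairing a_range.
rewrite pa_range andbT; apply/andP; split.
- by apply: contraNneq a_r => pa_s; rewrite -pia pa_s pi_s.
- by apply: contraNneq a_s => pa_r; rewrite -pia pa_r pi_r.
Qed.

Lemma open_count_remaining_pred j x : j \in [:: s; r] ->
  open_count (remaining n s r) pi lab j.-1 x = open_count (remaining n s r) pi lab j x.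
Proof.
have [s_range _ _] := block_facts.
move=> j_sr; have [j' j_eq] : exists j', j = j'.+1.
  by exists j.-1; move: j_sr s_range r_range; rewrite !inE /in_range => /orP[]/eqP->; lia.
subst j; symmetry; apply: open_count_skip => a a_rem.
move: j_sr (a_rem) (pi_remaining a_rem); rewrite !inE !mem_remaining.
by case/orP => /eqP-> /and3P[a_s a_r _] /and3P[pa_s pa_r _]; apply/andP.
Qed.

Lemma open_count_iota k x :
  open_count (iota 1 n) pi lab k x =
  (s <= k < r) && (lab s == x) + (r <= k < s) && (lab r == x) +
  open_count (remaining n s r) pi lab k x.
Proof.
have [s_range s_neq_r pi_s] := block_facts.
rewrite /open_count (permP (perm_iota_remaining s_range r_range s_neq_r)) /=.
by rewrite pi_s pi_r addnA.
Qed.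

Lemma open_count_last m x :
  open_count (remaining n s r) pi lab m x =
  if remaining m s r is [::] then 0
  else open_count (remaining n s r) pi lab (last 0 (remaining m s r)) x.
Proof.
elim: m => [|m IH].
  by rewrite open_count0 // => a /remaining_range /andP[].
have -> : remaining m.+1 s r =
    remaining m s r ++ (if (m.+1 != s) && (m.+1 != r) then [:: m.+1] else [::]).
  by rewrite /remaining -[m.+1]addn1 iotaD filter_cat /= add1n addn1.
case: ifP => [_|m_sr]; first by case: (remaining m s r) => //= a l; rewrite last_cat.
rewrite cats0 -IH -(open_count_remaining_pred (j := m.+1)) //.
by move/negbT: m_sr; rewrite negb_and !negbK !inE.
Qed.

Lemma restrict_pairing_pp :
  is_pair_partition (size (remaining n s r)) (restrict_pairing n s r pi).
Proof.
move=> j j_range; have a_rem := unrelab_mem j_range.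
set a := unrelab n s r j in a_rem *.
have pa_rem := pi_remaining a_rem.
have [_ pa_neq pia] := pi_pairing (remaining_range a_rem).
rewrite /restrict_pairing -/a (unrelab_relab pa_rem) pia relab_unrelab //.
split => //; first exact: relab_range.
apply: contra_neq pa_neq => /(congr1 (unrelab n s r)).
by rewrite unrelab_relab.
Qed.

Lemma restrict_labels_const :
  (forall k, in_range n k -> lab (pi k) = lab k) ->
  forall j, in_range (size (remaining n s r)) j ->
  restrict_labels n s r lab (restrict_pairing n s r pi j) = restrict_labels n s r lab j.
Proof.
move=> lab_const j j_range; have a_rem := unrelab_mem j_range.
rewrite /restrict_labels /restrict_pairing unrelab_relab ?pi_remaining //.
exact: lab_const (remaining_range a_rem).
Qed.

Lemma open_count_relabel k x : k \in remaining n s r ->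
  open_count (iota 1 (size (remaining n s r))) (restrict_pairing n s r pi)
    (restrict_labels n s r lab) (relab n s r k) x =
  open_count (remaining n s r) pi lab k x.
Proof.
move=> k_rem; rewrite /open_count -map_relab count_map.
apply: eq_in_count => a a_rem /=.
rewrite /restrict_pairing /restrict_labels !unrelab_relab ?pi_remaining //.
by rewrite leq_relab ?ltn_relab ?pi_remaining.
Qed.

Lemma count_prev_word (u : nat -> seq 'I_L) x :
  {in remaining n s r, forall j,
     count_mem x (u j) = open_count (remaining n s r) pi lab j x} ->
  forall k, k <= n.+1 ->
  count_mem x (prev_word u s r k) = open_count (remaining n s r) pi lab k.-1 x.
Proof.
move=> u_count k k_le; rewrite open_count_last /prev_word.
case E: (remaining k.-1 s r) => [|a l] //; apply: u_count.
have : last a l \in remaining k.-1 s r by rewrite E mem_last.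
by rewrite !mem_remaining => /and3P[-> ->]; rewrite /in_range /=; lia.
Qed.

Lemma count_insert_block (u : nat -> seq 'I_L) x :
  s < r -> lab s = lab r ->
  {in remaining n s r, forall j,
     count_mem x (u j) = open_count (remaining n s r) pi lab j x} ->
  forall k, in_range n k ->
  count_mem x (insert_block u (lab r) s r k) = open_count (iota 1 n) pi lab k x.
Proof.
move=> s_lt_r lab_sr u_count k k_range.
have [s_range _ _] := block_facts.
have [s_le r_le] : s <= n.+1 /\ r <= n.+1 by move: s_range r_range; rewrite /in_range; lia.
have u_count_k : k != s -> k != r ->
    count_mem x (u k) = open_count (remaining n s r) pi lab k x.
  by move=> k_s k_r; apply: u_count; rewrite mem_remaining k_s k_r.
rewrite open_count_iota /insert_block lab_sr.
case: (ltnP k s) => [k_lt_s|s_le_k]; first by rewrite u_count_k; lia.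
case: eqVneq => [->|k_neq_s].
  by rewrite [count_mem x _]/= count_prev_word ?open_count_remaining_pred ?mem_head //; lia.
case: (ltnP k r) => [k_lt_r|r_le_k].
  by rewrite [count_mem x _]/= u_count_k; lia.
case: eqVneq => [->|k_neq_r].
  by rewrite count_prev_word ?open_count_remaining_pred ?inE ?eqxx ?orbT //; lia.
by rewrite u_count_k //; lia.
Qed.

End RemoveBlock.

Lemma open_count_succ L n pi (lab : nat -> 'I_L) k x :
  is_pair_partition n pi -> in_range n k.+1 ->
  open_count (iota 1 n) pi lab k.+1 x + (pi k.+1 < k.+1) && (lab (pi k.+1) == x) =
  open_count (iota 1 n) pi lab k x + (k.+1 < pi k.+1) && (lab k.+1 == x).
Proof.
move=> pi_pairing k_range.
rewrite !(open_count_iota lab pi_pairing k_range (erefl (pi k.+1))).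
rewrite -(open_count_remaining_pred lab pi_pairing k_range (erefl _) (j := k.+1))
  ?inE ?eqxx ?orbT //=.
lia.
Qed.

Lemma closer_opener n pi k : is_pair_partition n pi -> in_range n k ->
  (pi k < k) = ~~ (k < pi k).
Proof.
by move=> pi_pairing /pi_pairing[_ pik _]; rewrite ltnNge leq_eqVlt eq_sym (negbTE pik).
Qed.

Lemma signed_indicator_inj (T : eqType) (b1 b2 : bool) (x1 x2 : T) :
  (forall x, b1 && (x1 == x) + ~~ b2 && (x2 == x) =
             b2 && (x2 == x) + ~~ b1 && (x1 == x) :> nat) ->
  b1 = b2 /\ x1 = x2.
Proof. by move/(_ x1); rewrite eqxx; case: b1; case: b2; case: eqP. Qed.

(* [minn (pi1 j) (pi2 j) < j]: position j closes a block in one of the two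
   pairings. *)
Definition agree_upto L (pi1 pi2 : nat -> nat) (lab1 lab2 : nat -> 'I_L) k :=
  forall j, 1 <= j <= k ->
    lab1 j = lab2 j /\ (minn (pi1 j) (pi2 j) < j -> pi1 j = pi2 j).

Lemma agree_upto_sym L pi1 pi2 (lab1 lab2 : nat -> 'I_L) k :
  agree_upto pi1 pi2 lab1 lab2 k -> agree_upto pi2 pi1 lab2 lab1 k.
Proof. by move=> agr j /agr[lab_j pi_j]; split=> //; rewrite minnC => /pi_j. Qed.

Lemma agree_closer_partner L (G : rel 'I_L) n pi1 pi2 lab1 lab2 k :
  irreflexive G -> in_Pi G n pi1 lab1 -> in_Pi G n pi2 lab2 ->
  agree_upto pi1 pi2 lab1 lab2 k -> in_range n k.+1 -> lab1 k.+1 = lab2 k.+1 ->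
  pi1 k.+1 < k.+1 -> pi2 k.+1 < k.+1 -> pi1 k.+1 = pi2 k.+1.
Proof.
move=> G_irr.
wlog pi12 : pi1 pi2 lab1 lab2 / pi1 k.+1 < pi2 k.+1.
  move=> hwlog P1 P2 agr K_range lab_K c1 c2.
  case: (ltngtP (pi1 k.+1) (pi2 k.+1)) => [pi12|pi21|//].
    exact: hwlog pi12 P1 P2 agr K_range lab_K c1 c2.
  by symmetry; apply: hwlog pi21 P2 P1 (agree_upto_sym agr) K_range (esym lab_K) c2 c1.
move=> [pp1 _ cross1] [pp2 lab2_const _] agr K_range lab_K _ c2; exfalso.
have [b_range _ pi2_b] := pp2 _ K_range.
set b := pi2 k.+1 in pi12 c2 b_range pi2_b.
have [lab_b pi_b] : lab1 b = lab2 b /\ (minn (pi1 b) (pi2 b) < b -> pi1 b = pi2 b).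
  by apply: agr; move: b_range; rewrite /in_range; lia.
rewrite pi2_b in pi_b.
have [c_range c_neq_b pi1_c] := pp1 _ b_range.
set c := pi1 b in lab_b pi_b c_range c_neq_b pi1_c.
have b_lt_c : b < c.
  case: (ltnP b c) => // c_le_b.
  have c_K : c = k.+1 by apply: pi_b; lia.
  by move: c_le_b; rewrite c_K; lia.
have c_neq_K : c != k.+1 by apply: contraTneq pi12 => c_K; rewrite -c_K pi1_c ltnn.
have c_gt_K : k.+1 < c.
  rewrite ltnNge; apply/negP => c_le_K.
  have [_ pi_c] : lab1 c = lab2 c /\ (minn (pi1 c) (pi2 c) < c -> pi1 c = pi2 c).
    by apply: agr; move: c_range c_le_K c_neq_K; rewrite /in_range; lia.
  have [_ _ pi2_pi2_c] := pp2 _ c_range.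
  rewrite pi1_c in pi_c; have pi2_c : pi2 c = b by apply/esym/pi_c; lia.
  by move: pi2_pi2_c c_neq_K; rewrite pi2_c pi2_b => ->; rewrite eqxx.
have cross : crossing pi1 k.+1 b by rewrite /crossing -/c; apply/and3P; split; lia.
have := cross1 _ _ K_range b_range cross.
by rewrite lab_b -[lab2 b]lab2_const // -/b pi2_b -lab_K G_irr.
Qed.

Lemma agree_upto_succ L (G : rel 'I_L) n pi1 pi2 lab1 lab2 k :
  irreflexive G -> in_Pi G n pi1 lab1 -> in_Pi G n pi2 lab2 -> in_range n k.+1 ->
  (forall x, open_count (iota 1 n) pi1 lab1 k x = open_count (iota 1 n) pi2 lab2 k x) ->
  (forall x, open_count (iota 1 n) pi1 lab1 k.+1 x =
             open_count (iota 1 n) pi2 lab2 k.+1 x) ->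
  agree_upto pi1 pi2 lab1 lab2 k -> agree_upto pi1 pi2 lab1 lab2 k.+1.
Proof.
move=> G_irr P1 P2 K_range open_k open_K agr.
have [[pp1 lab1_const _] [pp2 lab2_const _]] := (P1, P2).
have [opener_K lab_K] : (k.+1 < pi1 k.+1) = (k.+1 < pi2 k.+1) /\ lab1 k.+1 = lab2 k.+1.
  apply: signed_indicator_inj => x.
  have := open_count_succ lab1 x pp1 K_range; have := open_count_succ lab2 x pp2 K_range.
  rewrite lab1_const // lab2_const // (closer_opener pp1 K_range) (closer_opener pp2 K_range).
  rewrite open_k open_K; lia.
move=> j /andP[j_pos]; rewrite leq_eqVlt ltnS => /orP[/eqP->|j_le].
  2: by apply: agr; rewrite j_pos.
split=> // closer.
have /andP[closer1 closer2] : (pi1 k.+1 < k.+1) && (pi2 k.+1 < k.+1).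
  by move: closer; rewrite gtn_min !(closer_opener _ K_range) // opener_K orbb andbb.
exact: agree_closer_partner G_irr P1 P2 agr K_range lab_K closer1 closer2.
Qed.

Lemma agree_upto_eq L n pi1 pi2 (lab1 lab2 : nat -> 'I_L) :
  is_pair_partition n pi1 -> is_pair_partition n pi2 ->
  agree_upto pi1 pi2 lab1 lab2 n ->
  forall k, in_range n k -> pi1 k = pi2 k /\ lab1 k = lab2 k.
Proof.
move=> pp1 pp2 agr k k_range; have [lab_k pi_k] := agr k k_range.
split=> //; case: (ltnP (minn (pi1 k) (pi2 k)) k) => [/pi_k //|k_le].
have [c_range _ pi1_c] := pp1 k k_range.
have [_ pi_c] := agr _ c_range; rewrite pi1_c in pi_c.
have pi2_c : pi2 (pi1 k) = k by apply/esym/pi_c; have [_ ? _] := pp1 k k_range; lia.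
have [_ _ pi2_pi2_c] := pp2 _ c_range.
by rewrite -[in LHS]pi2_pi2_c pi2_c.
Qed.

Lemma open_counts_inj L (G : rel 'I_L) n pi1 pi2 lab1 lab2 :
  irreflexive G -> in_Pi G n pi1 lab1 -> in_Pi G n pi2 lab2 ->
  (forall k, in_range n k -> forall x,
     open_count (iota 1 n) pi1 lab1 k x = open_count (iota 1 n) pi2 lab2 k x) ->
  forall k, in_range n k -> pi1 k = pi2 k /\ lab1 k = lab2 k.
Proof.
move=> G_irr P1 P2 open_eq.
have [[pp1 _ _] [pp2 _ _]] := (P1, P2).
suff agr k : k <= n -> agree_upto pi1 pi2 lab1 lab2 k.
  exact: agree_upto_eq pp1 pp2 (agr n (leqnn n)).
have iota_pos : {in iota 1 n, forall a, 0 < a} by move=> a; rewrite mem_iota => /andP[].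
elim: k => [|k IH] k_lt; first by move=> j; lia.
have K_range : in_range n k.+1 by rewrite /in_range; lia.
apply: agree_upto_succ G_irr P1 P2 K_range _ (open_eq _ K_range) (IH (ltnW k_lt)).
case: k {IH} k_lt => [|k] k_lt x; first by rewrite !open_count0.
by apply: open_eq; rewrite /in_range; lia.
Qed.

Definition first_closer n (pi : nat -> nat) : nat :=
  head 0 [seq k <- iota 1 n | pi k < k].

Lemma first_closer_spec n pi : is_pair_partition n pi -> 0 < n ->
  in_range n (first_closer n pi) /\ pi (first_closer n pi) < first_closer n pi.
Proof.
move=> pp n_pos.
have n_range : in_range n n by rewrite /in_range n_pos leqnn.
have n_closer : n \in [seq k <- iota 1 n | pi k < k].
  have [pin_range pin_neq _] := pp n n_range.
  by rewrite mem_filter mem_iota; move: pin_range pin_neq; rewrite /in_range; lia.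
have : first_closer n pi \in [seq k <- iota 1 n | pi k < k].
  by move: n_closer; rewrite /first_closer; case: filter => // a l _; exact: mem_head.
by rewrite mem_filter mem_iota /in_range; split; lia.
Qed.

Lemma Phi_succ L p pi (lab : nat -> 'I_L) : 0 < p ->
  let n := p.+1.*2 in let r := first_closer n pi in let s := pi r in
  Phi p.+1 pi lab =1 insert_block
    (fun k => Phi p (restrict_pairing n s r pi) (restrict_labels n s r lab) (relab n s r k))
    (lab r) s r.
Proof. by case: p. Qed.

Lemma Phi_count L p pi (lab : nat -> 'I_L) : 0 < p ->
  is_pair_partition p.*2 pi -> (forall k, in_range p.*2 k -> lab (pi k) = lab k) ->
  forall k, in_range p.*2 k -> forall x,
  count_mem x (Phi p pi lab k) = open_count (iota 1 p.*2) pi lab k x.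
Proof.
elim: p pi lab => [//|p IH] pi lab _ pp lab_const k k_range x.
case: (posnP p) => [p0|p_pos].
  subst p; have [pi1_range pi1_neq pi_pi1] := pp 1 isT.
  have pi1 : pi 1 = 2 by move: pi1_range pi1_neq; rewrite /in_range; lia.
  rewrite pi1 in pi_pi1.
  have [->|->] : k = 1 \/ k = 2 by move: k_range; rewrite /in_range; lia.
    by rewrite /open_count /= pi1 !addn0.
  by rewrite /open_count /= pi1 pi_pi1.
rewrite Phi_succ //.
set n := p.+1.*2 in pp lab_const k_range *.
have [r_range s_lt_r] := first_closer_spec pp isT.
set r := first_closer n pi in r_range s_lt_r *.
set s := pi r in s_lt_r *.
have [s_range s_neq_r _] := block_facts pp r_range (erefl s).
have size_rem : size (remaining n s r) = p.*2.
  have := perm_size (perm_iota_remaining s_range r_range s_neq_r).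
  by rewrite size_iota /= /n; lia.
have pp' := restrict_pairing_pp pp r_range (erefl s); rewrite size_rem in pp'.
have lab_const' := restrict_labels_const pp r_range (erefl s) lab_const.
rewrite size_rem in lab_const'.
apply: count_insert_block => //; first exact: lab_const.
move=> j j_rem; rewrite IH //; last by rewrite -size_rem relab_range.
by rewrite -size_rem open_count_relabel.
Qed.

Theorem lemma3p3 (L : nat) (G : rel 'I_L) (p : nat) :
  simple_loopless G -> 1 <= p ->
  forall (pi1 pi2 : nat -> nat) (lab1 lab2 : nat -> 'I_L),
    in_Pi G p.*2 pi1 lab1 -> in_Pi G p.*2 pi2 lab2 ->
    (forall k, in_range p.*2 k ->
       trace_eq G (Phi p pi1 lab1 k) (Phi p pi2 lab2 k)) ->
    forall k, in_range p.*2 k -> pi1 k = pi2 k /\ lab1 k = lab2 k.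
Proof.
move=> [_ G_irr] p_pos pi1 pi2 lab1 lab2 P1 P2 Phi_trace_eq.
have [[pp1 lab1_const _] [pp2 lab2_const _]] := (P1, P2).
apply: open_counts_inj G_irr P1 P2 _ => k k_range x.
rewrite -(Phi_count p_pos pp1 lab1_const k_range) -(Phi_count p_pos pp2 lab2_const k_range).
exact: trace_eq_count (Phi_trace_eq k k_range) x.
Qed.
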